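(* Let $A=\begin{pmatrix}3&2&1&0\\2&3&2&1\\1&2&2&1\\0&1&1&1\end{pmatrix}$ and $f(x)=x^\top A x$ for $x\in\mathbb{Z}^4$. Then $f$ is multimodular, but its projection to $U=\{1,2,4\}$, namely $f^U(y_1,y_2,y_4)=\inf_{z\in\mathbb{Z}} f(y_1,y_2,z,y_4)$, regarded as a function of $(y_1,y_2,y_4)\in\mathbb{Z}^3$ in this order, is finite everywhere and is not multimodular. In particular, the projection of a multimodular function to a non-interval subset of variables need not be multimodular.
   Context: For $f:\mathbb{Z}^n\to\mathbb{R}\cup\{+\infty\}$, $\mathrm{dom}\, f=\{x\in\mathbb{Z}^n: f(x)<+\infty\}$. Let $e_i$ denote the $i$-th unit vector of $\mathbb{Z}^n$ and $\mathcal{F}=\{-e_1,\ e_1-e_2,\ e_2-e_3,\ \dots,\ e_{n-1}-e_n,\ e_n\}$. A function $f:\mathbb{Z}^n\to\mathbb{R}\cup\{+\infty\}$ is called multimodular if $\mathrm{dom}\, f\neq\emptyset$ and $f(z+d)+f(z+d')\ge f(z)+f(z+d+d')$ for all $z\in\mathrm{dom}\, f$ and all distinct $d,d'\in\mathcal{F}$ (with the usual conventions for $+\infty$). *)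

From Stdlib Require Import ZArith Reals.
From mathcomp Require Import all_boot.

Set Implicit Arguments.
Unset Strict Implicit.
Unset Printing Implicit Defensive.

Definition zvec (n : nat) := 'I_n -> Z.

(* extended reals R ∪ {+oo}: None = +oo *)
Definition ereal := option R.

Definition eadd (a b : ereal) : ereal :=
  match a, b with Some x, Some y => Some (Rplus x y) | _, _ => None end.

Definition ege (a b : ereal) : Prop :=
  match a, b with
  | _, None => a = None
  | None, Some _ => True
  | Some x, Some y => Rge x y
  end.

Definition dom (n : nat) (f : zvec n -> ereal) (x : zvec n) : Prop := f x <> None.

(* unit vector e_{k+1} (0-based index k); zero if k >= n *)
Definition unitv (n k : nat) : zvec n :=
  fun j => if nat_of_ord j == k then 1%Z else 0%Z.

Arguments unitv : clear implicits.
Definition vadd n (x y : zvec n) : zvec n := fun j => (x j + y j)%Z.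
Definition vsub n (x y : zvec n) : zvec n := fun j => (x j - y j)%Z.
Definition vopp n (x : zvec n) : zvec n := fun j => (- x j)%Z.

(* The family F = {-e_1, e_1-e_2, ..., e_{n-1}-e_n, e_n}, indexed by k = 0..n:
   k = 0 : -e_1 ;  1 <= k <= n-1 : e_k - e_{k+1} ;  k = n : e_n
   (with 1-based e as in the paper; unitv is 0-based). *)
Definition Fdir (n k : nat) : zvec n :=
  if k == 0 then vopp (unitv n 0)
  else if k == n then unitv n (n - 1)
  else vsub (unitv n (k - 1)) (unitv n k).

Arguments Fdir : clear implicits.
(* multimodularity; for n >= 1 the directions Fdir n k (k <= n) are pairwise
   distinct, so "distinct d, d' in F" = "distinct indices k, k' <= n". *)
Definition multimodular (n : nat) (f : zvec n -> ereal) : Prop :=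
  (exists x, dom f x) /\
  forall (z : zvec n) (k k' : nat), dom f z -> k <= n -> k' <= n -> k <> k' ->
    ege (eadd (f (vadd z (Fdir n k))) (f (vadd z (Fdir n k'))))
        (eadd (f z) (f (vadd (vadd z (Fdir n k)) (Fdir n k')))).

Definition is_inf (S : R -> Prop) (m : R) : Prop :=
  (forall r, S r -> Rle m r) /\
  (forall m', (forall r, S r -> Rle m' r) -> Rle m' m).

Definition Amat (i j : nat) : Z :=
  match i, j with
  | 0, 0 => 3%Z | 0, 1 => 2%Z | 0, 2 => 1%Z | 0, 3 => 0%Z
  | 1, 0 => 2%Z | 1, 1 => 3%Z | 1, 2 => 2%Z | 1, 3 => 1%Z
  | 2, 0 => 1%Z | 2, 1 => 2%Z | 2, 2 => 2%Z | 2, 3 => 1%Z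
  | 3, 0 => 0%Z | 3, 1 => 1%Z | 3, 2 => 1%Z | 3, 3 => 1%Z
  | _, _ => 0%Z
  end.

Definition coord4 (x : zvec 4) (k : nat) : Z := x (@inord 3 k).

Definition fA (x : zvec 4) : ereal :=
  Some (IZR (foldr Z.add 0%Z
    [seq (Amat i j * coord4 x i * coord4 x j)%Z | i <- iota 0 4, j <- iota 0 4])).

Definition ext124 (y : zvec 3) (z : Z) : zvec 4 :=
  fun j => match nat_of_ord j with
           | 0 => y (@inord 2 0)
           | 1 => y (@inord 2 1)
           | 2 => z
           | _ => y (@inord 2 2)
           end.

(* Completing the square in the third variable, f(y1,y2,z,y4) = Q(y1,y2,y4) + 2z^2 + 2zs with
   s = y1 + 2y2 + y4, so over integers z the infimum is attained at z = -floor(s/2) and equals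
   Q - floor(s^2/2).  Multimodularity of f is a finite check of the 20 quadratic inequalities
   given by the pairs of directions; the floor in the projection destroys one of them at
   (0,0,1) with the directions -e1 and e3: g(-1,0,1) + g(0,0,2) = 4 + 2 < 1 + 7 = g(0,0,1) + g(-1,0,2). *)
From Stdlib Require Import ZArith Reals Lia.
From mathcomp Require Import all_boot.

Open Scope Z_scope.

Lemma sqr_div2 s : s * s / 2 = 2 * (s / 2) * (s / 2) + 2 * (s / 2) * (s mod 2).
Proof.
have s_eq := Z.div_mod s 2 ltac:(lia); have := Z.mod_pos_bound s 2 ltac:(lia).
move: s_eq; move: (s / 2) (s mod 2) => q r -> r_bound.
by symmetry; apply: (Z.div_unique_pos _ _ _ (r * r)); nia.
Qed.

Lemma min_2sqr_2mul s c : - (s * s / 2) <= 2 * c * c + 2 * c * s.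
Proof.
rewrite sqr_div2; have s_eq := Z.div_mod s 2 ltac:(lia).
have := Z.mod_pos_bound s 2 ltac:(lia).
move: s_eq; move: (s / 2) (s mod 2) => q r -> r_bound.
(* the gap is 2 t (t + r) with t = c + q and r in {0, 1} *)
have : 0 <= (c + q) * (c + q + r) by case: (Z.le_gt_cases 0 (c + q)); nia.
nia.
Qed.

Lemma min_2sqr_2mul_attained s :
  2 * (- (s / 2)) * (- (s / 2)) + 2 * (- (s / 2)) * s = - (s * s / 2).
Proof.
rewrite sqr_div2; have s_eq := Z.div_mod s 2 ltac:(lia).
move: s_eq; move: (s / 2) (s mod 2) => q r s_eq.
by rewrite s_eq; ring.
Qed.

Lemma is_inf_min (S : R -> Prop) (m : R) :
  (forall r, S r -> Rle m r) -> S m -> is_inf S m.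
Proof. by move=> lb Sm; split=> // m' /(_ m Sm). Qed.

Definition quadA (a b c d : Z) : Z :=
  3*a*a + 3*b*b + 2*c*c + d*d + 2*(2*a*b + a*c + 2*b*c + b*d + c*d).

Lemma fA_quadA (x : zvec 4) :
  fA x = Some (IZR (quadA (x (inord 0)) (x (inord 1)) (x (inord 2)) (x (inord 3)))).
Proof. by rewrite /fA /coord4; cbn -[Z.mul Z.add]; do 2 f_equal; rewrite /quadA; ring. Qed.

Lemma fA_ext124 (y : zvec 3) z :
  fA (ext124 y z) = Some (IZR (quadA (y (inord 0)) (y (inord 1)) z (y (inord 2)))).
Proof. by rewrite fA_quadA /ext124 !inordK. Qed.

Lemma multimodular_fA : multimodular fA.
Proof.
split; first by exists (fun _ => 0); rewrite /dom fA_quadA.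
move=> z k k' _ hk hk' hne.
case: k hk hne => [|[|[|[|[|k]]]]] // _;
case: k' hk' => [|[|[|[|[|k']]]]] // _ hne; try by case: hne.
all: rewrite !fA_quadA /vadd /Fdir /vopp /vsub /unitv /= !inordK //=.
all: rewrite -!plus_IZR; apply: IZR_ge; rewrite /quadA; nia.
Qed.

Definition projA (a b d : Z) : Z :=
  3*a*a + 3*b*b + d*d + 4*a*b + 2*b*d - (a + 2*b + d) * (a + 2*b + d) / 2.

Lemma quadA_split a b c d :
  quadA a b c d = projA a b d + (a + 2*b + d) * (a + 2*b + d) / 2
                  + (2 * c * c + 2 * c * (a + 2*b + d)).
Proof. rewrite /quadA /projA; ring. Qed.

Lemma projA_le_quadA a b c d : projA a b d <= quadA a b c d.
Proof. by rewrite quadA_split; have := min_2sqr_2mul (a + 2*b + d) c; lia. Qed.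

Lemma quadA_argmin a b d : quadA a b (- ((a + 2*b + d) / 2)) d = projA a b d.
Proof. by rewrite quadA_split min_2sqr_2mul_attained; ring. Qed.

Lemma is_inf_projA (y : zvec 3) :
  is_inf (fun r => exists z, fA (ext124 y z) = Some r)
         (IZR (projA (y (inord 0)) (y (inord 1)) (y (inord 2)))).
Proof.
apply: is_inf_min.
  by move=> r [c]; rewrite fA_ext124 => -[<-]; apply/IZR_le/projA_le_quadA.
exists (- ((y (inord 0) + 2 * y (inord 1) + y (inord 2)) / 2)).
by rewrite fA_ext124 quadA_argmin.
Qed.

Lemma projA_not_multimodular :
  ~ multimodular (fun y : zvec 3 => Some (IZR (projA (y (inord 0)) (y (inord 1)) (y (inord 2))))).
Proof.
move=> [_ /(_ (unitv 3 2) 0%N 3%N)].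
rewrite /vadd /Fdir /vopp /vsub /unitv /= !inordK //= -!plus_IZR.
by move=> /(_ ltac:(discriminate) isT isT ltac:(discriminate)) /Rge_le /le_IZR.
Qed.

Theorem mainTheorem10 :
  multimodular fA /\
  exists g : zvec 3 -> R,
    (forall y : zvec 3, is_inf (fun r => exists z : Z, fA (ext124 y z) = Some r) (g y)) /\
    ~ multimodular (fun y : zvec 3 => Some (g y)).
Proof.
split; first exact: multimodular_fA.
exists (fun y => IZR (projA (y (inord 0)) (y (inord 1)) (y (inord 2)))).
split; [exact: is_inf_projA | exact: projA_not_multimodular].
Qed.
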